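(* Let $\{(\mathbf{x}^k,\mathbf{r}^k,\boldsymbol{\lambda}^k)\}$ be generated by Algorithm 1. If $0<\rho\le\frac{\beta}{m}$ and $\mathbf{P}_i\succeq L_i\mathbf{I}+\beta\mathbf{A}_i^\top\mathbf{A}_i$ for all $i=1,\ldots,m$, then $F(\mathbf{x}^k)\to F(\mathbf{x}^* )$ in probability and $\|\mathbf{r}^k\|\to0$ in probability, where $\mathbf{x}^*$ is as in the solution-existence assumption.
   Context: Problem: $\min_{\mathbf{x}} F(\mathbf{x}):=f(\mathbf{x})+g(\mathbf{x})$ s.t. $\mathbf{A}\mathbf{x}=\mathbf{b}$, where $\mathbf{x}=(\mathbf{x}_1;\ldots;\mathbf{x}_m)$ with blocks $\mathbf{x}_i\in\mathbb{R}^{n_i}$, $g(\mathbf{x})=\sum_{i=1}^m g_i(\mathbf{x}_i)$, $\mathbf{A}=[\mathbf{A}_1,\ldots,\mathbf{A}_m]$ with $\mathbf{A}_i\in\mathbb{R}^{q\times n_i}$, $\mathbf{b}\in\mathbb{R}^q$; $f$ is convex and continuously differentiable, each $g_i$ is proper, convex, lower semicontinuous. Define $\Phi(\bar{\mathbf{x}},\mathbf{x},\boldsymbol{\lambda})=F(\bar{\mathbf{x}})-F(\mathbf{x})-\langle\boldsymbol{\lambda},\mathbf{A}\bar{\mathbf{x}}-\mathbf{b}\rangle$. $\mathbf{U}_i\mathbf{y}$ denotes the vector whose $i$-th block is $\mathbf{y}_i$ and other blocks zero. Assumption (existence of a solution): there is $(\mathbf{x}^*,\boldsymbol{\lambda}^*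 )$ with $\mathbf{A}\mathbf{x}^*=\mathbf{b}$ and $\Phi(\mathbf{x},\mathbf{x}^*,\boldsymbol{\lambda}^* )\ge0$ for all $\mathbf{x}$. Assumption (gradient Lipschitz continuity): there are constants $L_i>0$ and $L_r$ with $\|\nabla_i f(\mathbf{x}+\mathbf{U}_i\mathbf{y})-\nabla_i f(\mathbf{x})\|\le L_i\|\mathbf{y}_i\|$ and $\|\nabla f(\mathbf{x}+\mathbf{U}_i\mathbf{y})-\nabla f(\mathbf{x})\|\le L_r\|\mathbf{y}_i\|$ for all $i,\mathbf{x},\mathbf{y}$. Algorithm 1 (randomized primal-dual block update): choose $\mathbf{x}^0$, set $\boldsymbol{\lambda}^0=\mathbf{0}$, $\mathbf{r}^0=\mathbf{A}\mathbf{x}^0-\mathbf{b}$, parameters $\beta>0,\rho>0$, symmetric PSD matrices $\mathbf{P}_i$. For $k=0,1,\ldots$: pick $i_k\in\{1,\ldots,m\}$ uniformly at random, independent of $i_0,\ldots,i_{k-1}$; set $\mathbf{x}_i^{k+1}=\mathbf{x}_i^k$ for $i\ne i_k$ and $$\mathbf{x}_{i_k}^{k+1}\in\arg\min_{\mathbf{x}_{i_k}}\big\langle\nabla_{i_k} f(\mathbf{x}^k)-\mathbf{A}_{i_k}^\top(\boldsymbol{\lambda}^k-\beta\mathbf{r}^k),\mathbf{x}_{i_k}\big\rangle+g_{i_k}(\mathbf{x}_{i_k})+\tfrac12\|\mathbf{x}_{i_k}-\mathbf{x}_{i_k}^k\|_{\mathbf{P}_{i_k}}^2$$ (with $\|\mathbf{z}\|_{\mathbf{M}}^2=\mathbf{z}^\top\mathbf{M}\mathbf{z}$);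 then $\mathbf{r}^{k+1}=\mathbf{r}^k+\mathbf{A}_{i_k}(\mathbf{x}_{i_k}^{k+1}-\mathbf{x}_{i_k}^k)$ (so $\mathbf{r}^k=\mathbf{A}\mathbf{x}^k-\mathbf{b}$) and $\boldsymbol{\lambda}^{k+1}=\boldsymbol{\lambda}^k-\rho\mathbf{r}^{k+1}$. *)

From mathcomp Require Import all_boot.
From Stdlib Require Import Reals ClassicalEpsilon.
Set Implicit Arguments. Unset Strict Implicit. Unset Printing Implicit Defensive.
Open Scope R_scope.

Definition Vec (N : nat) := 'I_N -> R.

Definition sumR (N : nat) (F : 'I_N -> R) : R := \big[Rplus/0]_(j < N) F j.
Definition sumB (N m : nat) (blk : 'I_N -> 'I_m) (i : 'I_m) (F : 'I_N -> R) : R :=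
  \big[Rplus/0]_(j < N | blk j == i) F j.

Definition dot (N : nat) (u v : Vec N) : R := sumR (fun j => u j * v j).
Definition norm (N : nat) (u : Vec N) : R := sqrt (dot u u).
Definition vsub (N : nat) (u v : Vec N) : Vec N := fun j => u j - v j.
Definition vcomb (N : nat) (t : R) (u v : Vec N) : Vec N :=
  fun j => t * u j + (1 - t) * v j.

Definition bdot (N m : nat) (blk : 'I_N -> 'I_m) (i : 'I_m) (u v : Vec N) : R :=
  sumB blk i (fun j => u j * v j).
Definition bnorm (N m : nat) (blk : 'I_N -> 'I_m) (i : 'I_m) (u : Vec N) : R :=
  sqrt (bdot blk i u u).
Definition Ublk (N m : nat) (blk : 'I_N -> 'I_m) (i : 'I_m) (y : Vec N) : Vec N :=
  fun j => if blk j == i then y j else 0.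
Definition vadd (N : nat) (u v : Vec N) : Vec N := fun j => u j + v j.

(* Matrices: A : 'I_q -> 'I_N -> R (q x N), A = [A_1,...,A_m] column blocks. *)
Definition mulv (q N : nat) (A : 'I_q -> 'I_N -> R) (x : Vec N) : Vec q :=
  fun r => sumR (fun j => A r j * x j).
Definition tmulv (q N : nat) (A : 'I_q -> 'I_N -> R) (v : Vec q) : Vec N :=
  fun j => sumR (fun r => A r j * v r).
Definition bmulv (q N m : nat) (blk : 'I_N -> 'I_m) (i : 'I_m)
  (A : 'I_q -> 'I_N -> R) (y : Vec N) : Vec q :=
  fun r => sumB blk i (fun j => A r j * y j).
(* ||z_i||^2_{P_i} with P_i the block-i principal submatrix of P *)
Definition bquad (N m : nat) (blk : 'I_N -> 'I_m) (i : 'I_m)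
  (P : 'I_N -> 'I_N -> R) (z : Vec N) : R :=
  sumB blk i (fun j => sumB blk i (fun l => z j * P j l * z l)).

(* ---- extended reals (-oo excluded): None = +oo ---- *)
Definition ER := option R.
Definition eplus (a b : ER) : ER :=
  match a, b with Some x, Some y => Some (x + y) | _, _ => None end.

Definition proper_fun (N : nat) (h : Vec N -> ER) : Prop := exists v, h v <> None.
Definition convex_efun (N : nat) (h : Vec N -> ER) : Prop :=
  forall u v a c t, h u = Some a -> h v = Some c -> 0 <= t <= 1 ->
    exists d, h (vcomb t u v) = Some d /\ d <= t * a + (1 - t) * c.
Definition lsc_efun (N : nat) (h : Vec N -> ER) : Prop :=
  forall v (s : R), match h v with None => True | Some a => s < a end ->
    exists delta, 0 < delta /\ forall w, norm (vsub w v) < delta ->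
      match h w with None => True | Some c => s < c end.

Definition convex_fun (N : nat) (f : Vec N -> R) : Prop :=
  forall u v t, 0 <= t <= 1 -> f (vcomb t u v) <= t * f u + (1 - t) * f v.
Definition has_gradient (N : nat) (f : Vec N -> R) (gradf : Vec N -> Vec N) : Prop :=
  forall x eps, 0 < eps -> exists delta, 0 < delta /\ forall y,
    norm (vsub y x) < delta ->
    Rabs (f y - f x - dot (gradf x) (vsub y x)) <= eps * norm (vsub y x).
Definition continuous_map (N M : nat) (G : Vec N -> Vec M) : Prop :=
  forall x eps, 0 < eps -> exists delta, 0 < delta /\ forall y,
    norm (vsub y x) < delta -> norm (vsub (G y) (G x)) < eps.

Definition block_fun (N m : nat) (blk : 'I_N -> 'I_m) (i : 'I_m) (h : Vec N -> ER) :=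
  forall x y, (forall j, blk j = i -> x j = y j) -> h x = h y.

Definition Fobj (N m : nat) (f : Vec N -> R) (g : 'I_m -> Vec N -> ER) (x : Vec N) : ER :=
  eplus (Some (f x)) (\big[eplus/Some 0]_(i < m) g i x).

Definition resid (q N : nat) (A : 'I_q -> 'I_N -> R) (b : Vec q) (x : Vec N) : Vec q :=
  fun r => mulv A x r - b r.

(* Probability of an event depending on the first k indices i_0..i_{k-1},
   which are i.i.d. uniform on 'I_m: uniform measure on k.-tuple 'I_m. *)
Definition prob (m k : nat) (E : k.-tuple 'I_m -> Prop) : R :=
  (\big[Rplus/0]_(t : k.-tuple 'I_m)
     (if excluded_middle_informative (E t) then 1 else 0)) / (INR m ^ k).

(* Algorithm 1, with iterates indexed by the history (i_0,...,i_{k-1}). *)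
Definition algorithm1 (N m q : nat) (blk : 'I_N -> 'I_m)
  (f : Vec N -> R) (gradf : Vec N -> Vec N) (g : 'I_m -> Vec N -> ER)
  (A : 'I_q -> 'I_N -> R) (b : Vec q) (beta rho : R)
  (P : 'I_m -> 'I_N -> 'I_N -> R)
  (x : forall k, k.-tuple 'I_m -> Vec N) (lam : forall k, k.-tuple 'I_m -> Vec q) : Prop :=
  (forall t : tuple_of 0%nat 'I_m, lam 0%nat t = fun _ => 0) /\
  forall (k : nat) (t : k.-tuple 'I_m) (i : 'I_m),
    let xk := x k t in
    let x' := x k.+1 [tuple of rcons t i] in
    let c := vsub (gradf xk) (tmulv A (vsub (lam k t)
                   (fun r => beta * resid A b xk r))) in
    let Psi z gz := bdot blk i c z + gz + / 2 * bquad blk i (P i) (vsub z xk) in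
    (forall j, blk j <> i -> x' j = xk j) /\
    (exists a, g i x' = Some a /\
       forall z gz, (forall j, blk j <> i -> z j = xk j) -> g i z = Some gz ->
         Psi x' a <= Psi z gz) /\
    lam k.+1 [tuple of rcons t i] = (fun r => lam k t r - rho * resid A b x' r).

(* With c = 1/(2 m rho), the potential
     W(x, mu) = Phi(x) - <mu - lam*, r(x)> + 1/2 sum_i |x_i - x*_i|^2_{P_i}
                + (beta/2 - rho) |r(x)|^2 + c |mu + rho r(x) - lam*|^2,
   where Phi(x) = F(x) - F* - <lam*, r(x)> >= 0 and r(x) = A x - b, dominates Phi
   because m rho <= beta.  Averaged over the m possible blocks, one iteration decreases
   W by at least (Phi(x^k) + rho/2 |r^k|^2) / m: the three-point inequality of the
   proximal step, the block descent lemma and P_i >= L_i I + beta A_i^T A_i bound each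
   block update, and summing over the blocks turns block gradients into the full
   gradient, to which convexity of f applies.  So E[Phi(x^k) + rho/2 |r^k|^2] tends to 0
   on the event that every block was drawn among the first K draws (after which every
   g_i(x^k) is finite), an event of probability at least 1 - m (1 - 1/m)^K.  Markov's
   inequality and |F(x) - F*| <= Phi(x) + |<lam*, r(x)>| conclude. *)

From HB Require Import structures.
From mathcomp Require Import all_boot.
From Stdlib Require Import Reals Lra Psatz ClassicalEpsilon FunctionalExtensionality.
Set Implicit Arguments. Unset Strict Implicit. Unset Printing Implicit Defensive.
Open Scope R_scope.

HB.instance Definition _ := Monoid.isComLaw.Build R 0 Rplus
  (fun x y z => esym (Rplus_assoc x y z)) Rplus_comm Rplus_0_l.
HB.instance Definition _ := Monoid.isComLaw.Build R 1 Rmult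
  (fun x y z => esym (Rmult_assoc x y z)) Rmult_comm Rmult_1_l.
HB.instance Definition _ := Monoid.isMulLaw.Build R 0 Rmult Rmult_0_l Rmult_0_r.
HB.instance Definition _ :=
  Monoid.isAddLaw.Build R Rmult Rplus Rmult_plus_distr_r Rmult_plus_distr_l.

Section RealSums.
Variables (I : finType) (P : pred I).

Lemma bigR_le (F G : I -> R) : (forall i, P i -> F i <= G i) ->
  \big[Rplus/0]_(i | P i) F i <= \big[Rplus/0]_(i | P i) G i.
Proof. by move=> FG; apply: (big_ind2 (fun a b => a <= b)) => // *; lra. Qed.

Lemma bigR_ge0 (F : I -> R) : (forall i, P i -> 0 <= F i) ->
  0 <= \big[Rplus/0]_(i | P i) F i.
Proof. by move=> F0; apply: (big_ind (fun a => 0 <= a)) => // *; lra. Qed.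

Lemma bigR_opp (F : I -> R) :
  \big[Rplus/0]_(i | P i) (- F i) = - \big[Rplus/0]_(i | P i) F i.
Proof. by rewrite (big_morph Ropp Ropp_plus_distr Ropp_0). Qed.

Lemma bigR_sub (F G : I -> R) :
  \big[Rplus/0]_(i | P i) (F i - G i) =
  \big[Rplus/0]_(i | P i) F i - \big[Rplus/0]_(i | P i) G i.
Proof. by rewrite /Rminus big_split /= bigR_opp. Qed.

Lemma le_mul_of_amgm (X a b : R) : 0 <= a -> 0 <= b ->
  (forall s, 0 < s -> 2 * X <= s * (a * a) + (b * b) / s) -> X <= a * b.
Proof.
move=> a0 b0 amgm.
case: (Rle_lt_or_eq_dec 0 a a0) => [a_pos | a_0];
  case: (Rle_lt_or_eq_dec 0 b b0) => [b_pos | b_0];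
  subst; apply: Rnot_lt_le => abX; have X0 : 0 < X by nra.
- have := amgm (b / a) ltac:(apply: Rdiv_lt_0_compat; lra).
  have -> : b / a * (a * a) + b * b / (b / a) = 2 * (a * b) by field; lra.
  lra.
- have := amgm (X / (a * a)) ltac:(apply: Rdiv_lt_0_compat; nra).
  have -> : X / (a * a) * (a * a) + 0 * 0 / (X / (a * a)) = X by field; nra.
  lra.
- have := amgm (b * b / X) ltac:(apply: Rdiv_lt_0_compat; nra).
  have -> : b * b / X * (0 * 0) + b * b / (b * b / X) = X by field; nra.
  lra.
- by have := amgm 1 Rlt_0_1; lra.
Qed.

Lemma bigR_cauchy_schwarz (u v : I -> R) :
  \big[Rplus/0]_(i | P i) (u i * v i) <=
  sqrt (\big[Rplus/0]_(i | P i) (u i * u i)) * sqrt (\big[Rplus/0]_(i | P i) (v i * v i)).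
Proof.
have uu0 : 0 <= \big[Rplus/0]_(i | P i) (u i * u i) by apply: bigR_ge0 => i _; nra.
have vv0 : 0 <= \big[Rplus/0]_(i | P i) (v i * v i) by apply: bigR_ge0 => i _; nra.
apply: le_mul_of_amgm; try apply: sqrt_pos.
move=> s s0; rewrite !sqrt_sqrt // /Rdiv (Rmult_comm _ (/ s)) !big_distrr -big_split /=.
apply: bigR_le => i _ /=.
have : 0 <= / s * ((s * u i - v i) * (s * u i - v i)).
  by apply: Rmult_le_pos; [apply/Rlt_le/Rinv_0_lt_compat | apply: Rle_0_sqr].
have -> : / s * ((s * u i - v i) * (s * u i - v i)) =
          s * (u i * u i) - 2 * (u i * v i) + / s * (v i * v i) by field; lra.
lra.
Qed.

End RealSums.

(* [field] rather than [ring]: the summands may contain divisions by numerals. *)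
Ltac sum_ring :=
  do ![rewrite big_distrr /= | rewrite -big_split /= | rewrite -bigR_sub | rewrite -bigR_opp];
  apply: eq_bigr => ? _; field.

Lemma bigR_const_ord (n : nat) (c : R) : \big[Rplus/0]_(i < n) c = INR n * c.
Proof.
elim: n => [|n IH]; first by rewrite big_ord0 /=; ring.
by rewrite big_ord_recr IH S_INR /=; ring.
Qed.

Lemma tuple_rcons_belast (T : Type) k (u : k.+1.-tuple T) :
  u = [tuple of rcons [tuple of belast (thead u) (behead_tuple u)] (last (thead u) (behead u))].
Proof. by apply: val_inj; rewrite /= -lastI; case: u => [[|a s] ?]. Qed.

Lemma tuple_rconsP (T : Type) k (u : k.+1.-tuple T) :
  exists (t : k.-tuple T) (i : T), u = [tuple of rcons t i].
Proof. by do 2 eexists; apply: tuple_rcons_belast. Qed.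

Lemma big_tuple_rcons (T : finType) k (h : k.+1.-tuple T -> R) :
  \big[Rplus/0]_(u : k.+1.-tuple T) h u =
  \big[Rplus/0]_(t : k.-tuple T) \big[Rplus/0]_(i : T) h [tuple of rcons t i].
Proof.
rewrite pair_big /= (reindex (fun p : k.-tuple T * T => [tuple of rcons p.1 p.2])) //=.
exists (fun u => ([tuple of belast (thead u) (behead_tuple u)], last (thead u) (behead u))).
- move=> [[s st] i] _ /=; congr pair.
    by apply: val_inj; case: s st => [|a s] st //=; rewrite belast_rcons.
  by case: s st => [|a s] st //=; rewrite last_rcons.
- by move=> u _; rewrite -tuple_rcons_belast.
Qed.

Section Blocks.
Variables (N m : nat) (blk : 'I_N -> 'I_m).

Lemma sumR_blocks (F : 'I_N -> R) : sumR F = \big[Rplus/0]_(i < m) sumB blk i F.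
Proof. by rewrite /sumR /sumB (partition_big blk xpredT). Qed.

Lemma sumR_on_block (i : 'I_m) (F : 'I_N -> R) :
  (forall j, blk j <> i -> F j = 0) -> sumR F = sumB blk i F.
Proof.
move=> F0; rewrite /sumR /sumB [RHS]big_mkcond /=.
by apply: eq_bigr => j _; case: eqP => // /F0.
Qed.

Lemma sumB_ext (i : 'I_m) (F G : 'I_N -> R) :
  (forall j, blk j = i -> F j = G j) -> sumB blk i F = sumB blk i G.
Proof. by move=> FG; apply: eq_bigr => j /eqP /FG. Qed.

Lemma bdot_cauchy_schwarz (i : 'I_m) (u v : Vec N) :
  bdot blk i u v <= bnorm blk i u * bnorm blk i v.
Proof. exact: bigR_cauchy_schwarz. Qed.

Lemma bdot_ge0 (i : 'I_m) (u : Vec N) : 0 <= bdot blk i u u.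
Proof. by apply: bigR_ge0 => j _; nra. Qed.

Lemma dot_on_block (i : 'I_m) (u d : Vec N) :
  (forall j, blk j <> i -> d j = 0) -> dot u d = bdot blk i u d.
Proof. by move=> d0; apply: sumR_on_block => j /d0 ->; ring. Qed.

Lemma bnorm_scale (i : 'I_m) (c : R) (d : Vec N) : 0 <= c ->
  bnorm blk i (fun j => c * d j) = c * bnorm blk i d.
Proof.
move=> c0; rewrite /bnorm -[in RHS](sqrt_square c c0) -sqrt_mult; [|nra|exact: bdot_ge0].
by congr sqrt; rewrite /bdot /sumB big_distrr /=; apply: eq_bigr => j _; ring.
Qed.

Lemma bdot_sum (u v : Vec N) : \big[Rplus/0]_(i < m) bdot blk i u v = dot u v.
Proof. by rewrite /dot sumR_blocks. Qed.

Lemma bquad_ext (i : 'I_m) (Pm : 'I_N -> 'I_N -> R) (u v : Vec N) :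
  (forall j, blk j = i -> u j = v j) -> bquad blk i Pm u = bquad blk i Pm v.
Proof.
by move=> uv; apply: sumB_ext => j /uv ->; apply: sumB_ext => l /uv ->.
Qed.

Lemma bdot_ext (i : 'I_m) (c u v : Vec N) :
  (forall j, blk j = i -> u j = v j) -> bdot blk i c u = bdot blk i c v.
Proof. by move=> uv; apply: sumB_ext => j /uv ->. Qed.

Lemma bquad_vsubC (i : 'I_m) (Pm : 'I_N -> 'I_N -> R) (u v : Vec N) :
  bquad blk i Pm (vsub u v) = bquad blk i Pm (vsub v u).
Proof. by apply: sumB_ext => j _; apply: sumB_ext => l _; rewrite /vsub; ring. Qed.

Lemma bdot_tmulv (q : nat) (i : 'I_m) (A : 'I_q -> 'I_N -> R) (w : Vec q) (u : Vec N) :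
  bdot blk i (tmulv A w) u = dot w (bmulv blk i A u).
Proof.
rewrite /bdot /tmulv /dot /bmulv /sumB /sumR.
under eq_bigr do rewrite big_distrl /=.
rewrite exchange_big /=; apply: eq_bigr => r _; rewrite big_distrr /=.
by apply: eq_bigr => j _; ring.
Qed.

End Blocks.

Lemma dot_ge0 (N : nat) (u : Vec N) : 0 <= dot u u.
Proof. by apply: bigR_ge0 => j _; nra. Qed.

Lemma dot_vsubl (N : nat) (u v w : Vec N) : dot (vsub u v) w = dot u w - dot v w.
Proof. by rewrite /dot /sumR -bigR_sub; apply: eq_bigr => j _; rewrite /vsub; ring. Qed.

Lemma norm_scale (N : nat) (h : R) (d : Vec N) : norm (fun j => h * d j) = Rabs h * norm d.
Proof.
rewrite /norm -sqrt_Rsqr_abs -sqrt_mult; [|exact: Rle_0_sqr|exact: dot_ge0].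
by congr sqrt; rewrite /dot /sumR big_distrr /=; apply: eq_bigr => j _; rewrite /Rsqr; ring.
Qed.

Lemma abs_dot_le_amgm (N : nat) (u v : Vec N) (s : R) : 0 < s ->
  Rabs (dot u v) <= s / 2 * dot u u + / (2 * s) * dot v v.
Proof.
move=> s0; have s2 : 0 < / (2 * s) by apply: Rinv_0_lt_compat; lra.
rewrite /dot /sumR !big_distrr -big_split /=; apply: Rabs_le; split.
- rewrite -bigR_opp; apply: bigR_le => j _.
  have : 0 <= / (2 * s) * ((s * u j + v j) * (s * u j + v j)).
    by apply: Rmult_le_pos; [lra | apply: Rle_0_sqr].
  have -> : / (2 * s) * ((s * u j + v j) * (s * u j + v j)) =
            s / 2 * (u j * u j) + / (2 * s) * (v j * v j) + u j * v j by field; lra.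
  lra.
- apply: bigR_le => j _.
  have : 0 <= / (2 * s) * ((s * u j - v j) * (s * u j - v j)).
    by apply: Rmult_le_pos; [lra | apply: Rle_0_sqr].
  have -> : / (2 * s) * ((s * u j - v j) * (s * u j - v j)) =
            s / 2 * (u j * u j) + / (2 * s) * (v j * v j) - u j * v j by field; lra.
  lra.
Qed.

Lemma derivable_pt_lim_quad (D K c : R) :
  derivable_pt_lim (fun s => s * D + K * (s * s)) c (D + 2 * K * c).
Proof.
have := derivable_pt_lim_plus _ _ c _ _
  (derivable_pt_lim_mult id (fct_cte D) c _ _ (derivable_pt_lim_id c) (derivable_pt_lim_const D c))
  (derivable_pt_lim_scal _ K c _ (derivable_pt_lim_Rsqr c)).
by rewrite /fct_cte /id; congr derivable_pt_lim; ring.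
Qed.

Lemma derivable_pt_lim_line (N : nat) (f : Vec N -> R) (gradf : Vec N -> Vec N)
    (x d : Vec N) (s : R) :
  has_gradient f gradf ->
  derivable_pt_lim (fun s => f (fun j => x j + s * d j)) s
     (dot (gradf (fun j => x j + s * d j)) d).
Proof.
move=> fg eps eps0.
set y := fun j => x j + s * d j; set nd := norm d.
have nd0 : 0 <= nd := sqrt_pos _.
have eps'0 : 0 < eps / (2 * (nd + 1)) by apply: Rdiv_lt_0_compat; lra.
have [delta [delta0 near_y]] := fg y _ eps'0.
have delta'0 : 0 < delta / (nd + 1) by apply: Rdiv_lt_0_compat; lra.
exists (mkposreal _ delta'0) => h h0 /= h_delta.
have h_pos : 0 < Rabs h := Rabs_pos_lt h h0.
have step : vsub (fun j => x j + (s + h) * d j) y = (fun j => h * d j).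
  by apply: functional_extensionality => j; rewrite /vsub /y; ring.
have dot_step : dot (gradf y) (fun j => h * d j) = h * dot (gradf y) d.
  by rewrite /dot /sumR big_distrr /=; apply: eq_bigr => j _; ring.
have h_nd : Rabs h * nd < delta.
  have := Rmult_lt_compat_r (nd + 1) _ _ ltac:(lra) h_delta.
  have -> : delta / (nd + 1) * (nd + 1) = delta by field; lra.
  nra.
have := near_y (fun j => x j + (s + h) * d j).
rewrite step norm_scale dot_step -/nd => /(_ h_nd) bound.
have -> : (f (fun j => x j + (s + h) * d j) - f y) / h - dot (gradf y) d =
          (f (fun j => x j + (s + h) * d j) - f y - h * dot (gradf y) d) / h by field.
rewrite /Rdiv Rabs_mult Rabs_inv.
apply: (Rle_lt_trans _ (eps / (2 * (nd + 1)) * nd)).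
  apply: (Rmult_le_reg_r (Rabs h)) => //.
  by rewrite Rmult_assoc Rinv_l ?Rmult_1_r; [nra | lra].
have -> : eps / (2 * (nd + 1)) * nd = eps / 2 * (nd / (nd + 1)) by field; lra.
have : nd / (nd + 1) < 1.
  by apply: (Rmult_lt_reg_r (nd + 1)); [|rewrite /Rdiv Rmult_assoc Rinv_l]; lra.
nra.
Qed.

Lemma derivable_pt_lim_le_slope (phi : R -> R) (l C : R) :
  derivable_pt_lim phi 0 l -> (forall h, 0 < h <= 1 -> phi h - phi 0 <= h * C) -> l <= C.
Proof.
move=> dphi slope; apply: Rnot_lt_le => Cl.
have [delta near0] := dphi (l - C) ltac:(lra).
set h := Rmin (delta / 2) 1.
have delta0 := cond_pos delta.
have h0 : 0 < h by apply: Rmin_pos; lra.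
have h1 : h <= 1 := Rmin_r _ _.
have h2 : h <= delta / 2 := Rmin_l _ _.
have hdelta : Rabs h < delta by rewrite Rabs_pos_eq; lra.
have := near0 h (Rgt_not_eq _ _ h0) hdelta; rewrite Rplus_0_l => /Rabs_def2 [_ lower].
have : (phi h - phi 0) / h <= C.
  apply: (Rmult_le_reg_r h) => //; rewrite /Rdiv Rmult_assoc Rinv_l; last lra.
  by rewrite Rmult_1_r Rmult_comm; apply: slope; lra.
lra.
Qed.

Lemma convex_gradient_ineq (N : nat) (f : Vec N -> R) (gradf : Vec N -> Vec N) (x y : Vec N) :
  convex_fun f -> has_gradient f gradf -> dot (gradf x) (vsub y x) <= f y - f x.
Proof.
move=> fconv fg.
have x_eq : x = (fun j => x j + 0 * vsub y x j).
  by apply: functional_extensionality => j; ring.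
have := derivable_pt_lim_line x (vsub y x) 0 fg; rewrite -x_eq => dphi.
apply: (derivable_pt_lim_le_slope dphi) => h h01; rewrite -x_eq.
have -> : (fun j => x j + h * vsub y x j) = vcomb h y x.
  by apply: functional_extensionality => j; rewrite /vcomb /vsub; ring.
have := fconv y x h ltac:(lra); lra.
Qed.

Lemma block_descent (N m : nat) (blk : 'I_N -> 'I_m) (f : Vec N -> R) (gradf : Vec N -> Vec N)
    (Li : R) (i : 'I_m) (x x' : Vec N) :
  has_gradient f gradf -> 0 <= Li ->
  (forall z y, bnorm blk i (vsub (gradf (vadd z (Ublk blk i y))) (gradf z))
               <= Li * bnorm blk i y) ->
  (forall j, blk j <> i -> x' j = x j) ->
  f x' <= f x + bdot blk i (gradf x) (vsub x' x)
          + Li / 2 * bdot blk i (vsub x' x) (vsub x' x).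
Proof.
move=> fg L0 lip off.
set d := vsub x' x; set D0 := bdot blk i (gradf x) d; set B := bdot blk i d d.
have d0 j : blk j <> i -> d j = 0 by move=> /off; rewrite /d /vsub => ->; ring.
pose psi s := f (fun j => x j + s * d j) - (s * D0 + Li / 2 * B * (s * s)).
have [c [mvt c01]] := MVT_cor2 psi _ 0 1 Rlt_0_1 (fun c _ =>
  derivable_pt_lim_minus _ _ c _ _ (derivable_pt_lim_line x d c fg)
                                   (derivable_pt_lim_quad D0 (Li / 2 * B) c)).
set yc := fun j => x j + c * d j in mvt.
have yc_eq : yc = vadd x (Ublk blk i (fun j => c * d j)).
  apply: functional_extensionality => j; rewrite /yc /vadd /Ublk.
  by case: eqP => // /d0 ->; ring.
have gain : dot (gradf yc) d - D0 <= Li * c * B.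
  rewrite (dot_on_block (gradf yc) d0) /D0 /bdot /sumB -bigR_sub.
  have -> : \big[Rplus/0]_(j < N | blk j == i) (gradf yc j * d j - gradf x j * d j)
            = bdot blk i (vsub (gradf yc) (gradf x)) d.
    by apply: eq_bigr => j _; rewrite /vsub; ring.
  apply: Rle_trans (bdot_cauchy_schwarz _ _ _ _) _.
  have := lip x (fun j => c * d j); rewrite -yc_eq bnorm_scale; last lra.
  have nd0 : 0 <= bnorm blk i d := sqrt_pos _.
  have -> : B = bnorm blk i d * bnorm blk i d by rewrite /bnorm sqrt_sqrt //; exact: bdot_ge0.
  nra.
have psi0 : psi 0 = f x.
  rewrite /psi; have -> : (fun j => x j + 0 * d j) = x.
    by apply: functional_extensionality => j; ring.
  ring.
have psi1 : psi 1 = f x' - (D0 + Li / 2 * B).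
  rewrite /psi; have -> : (fun j => x j + 1 * d j) = x'.
    by apply: functional_extensionality => j; rewrite /d /vsub; ring.
  ring.
have B0 : 0 <= B := bdot_ge0 _ _ _.
have : psi 1 - psi 0 <= 0 by rewrite mvt; nra.
by rewrite psi0 psi1 -/d -/D0 -/B; lra.
Qed.

Lemma le_of_forall_shrink (a c : R) :
  (forall t, 0 < t < 1 -> (1 - t) * a <= c) -> a <= c.
Proof.
move=> shrink; have half := shrink (/ 2) ltac:(lra).
case: (Rle_dec a 0) => a0; first nra.
apply: Rnot_lt_le => ca.
set t := Rmin (/ 2) ((a - c) / (2 * a)).
have t0 : 0 < t by apply: Rmin_pos; [lra | apply: Rdiv_lt_0_compat; lra].
have t2 : t <= / 2 := Rmin_l _ _.
have ta : t * a <= (a - c) / 2.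
  have -> : (a - c) / 2 = (a - c) / (2 * a) * a by field; lra.
  by apply: Rmult_le_compat_r; [lra | apply: Rmin_r].
have := shrink t ltac:(lra); lra.
Qed.

Section BlockProx.
Variables (N m : nat) (blk : 'I_N -> 'I_m) (i : 'I_m) (Pm : 'I_N -> 'I_N -> R).

Lemma bquad_vcomb (t : R) (u v : Vec N) :
  bquad blk i Pm (fun j => t * u j + (1 - t) * v j) =
  t * bquad blk i Pm u + (1 - t) * bquad blk i Pm v - t * (1 - t) * bquad blk i Pm (vsub u v).
Proof.
have -> : forall X Y Z, t * X + (1 - t) * Y - t * (1 - t) * Z
                        = t * X + (1 - t) * Y + - (t * (1 - t)) * Z by move=> *; ring.
rewrite /bquad /sumB !big_distrr -!big_split /=; apply: eq_bigr => j _.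
rewrite !big_distrr -!big_split /=; apply: eq_bigr => l _; rewrite /vsub; ring.
Qed.

Lemma bdot_vcomb (c u v : Vec N) (t : R) :
  bdot blk i c (fun j => t * u j + (1 - t) * v j) = t * bdot blk i c u + (1 - t) * bdot blk i c v.
Proof.
rewrite /bdot /sumB !big_distrr -big_split /=; apply: eq_bigr => j _; ring.
Qed.

Definition prox_obj (c xk z : Vec N) (gz : R) : R :=
  bdot blk i c z + gz + / 2 * bquad blk i Pm (vsub z xk).

Definition block_prox_min (h : Vec N -> ER) (c xk x' : Vec N) : Prop :=
  (forall j, blk j <> i -> x' j = xk j) /\
  exists a, h x' = Some a /\
    forall z gz, (forall j, blk j <> i -> z j = xk j) -> h z = Some gz ->
      prox_obj c xk x' a <= prox_obj c xk z gz.

Lemma prox_three_point (h : Vec N -> ER) (c xk x' z : Vec N) (a gz : R) :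
  convex_efun h -> block_prox_min h c xk x' -> h x' = Some a ->
  (forall j, blk j <> i -> z j = xk j) -> h z = Some gz ->
  / 2 * bquad blk i Pm (vsub z x') <= prox_obj c xk z gz - prox_obj c xk x' a.
Proof.
move=> hconv [x'off [a' [ha' x'min]]] ha zoff hz.
have a'a : a' = a by move: ha'; rewrite ha => -[].
subst a'.
apply: le_of_forall_shrink => t t01.
have [hw [w_def w_le]] := hconv z x' gz a t hz ha ltac:(lra).
have woff j : blk j <> i -> vcomb t z x' j = xk j.
  by move=> ji; rewrite /vcomb zoff // x'off //; ring.
have := x'min _ _ woff w_def; rewrite /prox_obj.
have -> : vsub (vcomb t z x') xk = fun j => t * vsub z xk j + (1 - t) * vsub x' xk j.
  by apply: functional_extensionality => j; rewrite /vsub /vcomb; ring.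
have -> : vsub z x' = vsub (vsub z xk) (vsub x' xk).
  by apply: functional_extensionality => j; rewrite /vsub; ring.
rewrite bquad_vcomb bdot_vcomb => le_w.
apply: (Rmult_le_reg_l t); first lra.
nra.
Qed.

End BlockProx.

Lemma big_eplus_Some (I : finType) (F : I -> ER) (G : I -> R) :
  (forall i, F i = Some (G i)) ->
  \big[eplus/Some 0]_(i : I) F i = Some (\big[Rplus/0]_(i : I) G i).
Proof. by move=> FG; apply: (big_rec2 (fun e r => e = Some r)) => // i e r _ ->; rewrite FG. Qed.

Lemma big_eplus_Some_finite (I : finType) (F : I -> ER) (v : R) :
  \big[eplus/Some 0]_(i : I) F i = Some v -> forall i, F i <> None.
Proof.
move=> + i; have : i \in index_enum I := mem_index_enum i.
elim: (index_enum I) v => [|a r IH] v //.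
rewrite big_cons inE; case: eqVneq => [-> | _] /=; case: (F a) => [fa|] //=.
by case E : (\big[eplus/Some 0]_(j <- r) F j) => [w|] //= ir _; apply: IH ir E.
Qed.

Lemma cv0_of_le_decrements (c : R) (u a : nat -> R) : 0 < c ->
  (forall n, 0 <= u n) -> (forall n, 0 <= a n <= c * (u n - u n.+1)) -> Un_cv a 0.
Proof.
move=> c0 u0 a_le.
have u_dec : Un_decreasing u by move=> n; have := a_le n; nra.
have u_lb : has_lb u by exists 0 => y [n ->]; rewrite /opp_seq; have := u0 n; lra.
have [l ul] := decreasing_cv u u_dec u_lb.
move=> eps eps0; have [N0 near_l] := ul (eps / (2 * c)) ltac:(apply: Rdiv_lt_0_compat; lra).
exists N0 => n n_ge; have [an0 an_le] := a_le n.
rewrite /R_dist Rminus_0_r Rabs_pos_eq //.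
have := near_l n n_ge; have := near_l n.+1 (le_S _ _ n_ge).
rewrite /R_dist => /Rabs_def2 [? ?] /Rabs_def2 [? ?].
have -> : eps = c * (2 * (eps / (2 * c))) by field; lra.
nra.
Qed.

Section Coverage.
Variables (m : nat).

Definition covered (K : nat) (s : seq 'I_m) : bool := [forall j, j \in take K s].

Definition b2R (c : bool) : R := if c then 1 else 0.

Definition uncovered (K k : nat) : R :=
  \big[Rplus/0]_(t : k.-tuple 'I_m) b2R (~~ covered K t).

Lemma covered_rcons (K : nat) (s : seq 'I_m) (i : 'I_m) :
  (K <= size s)%nat -> covered K (rcons s i) = covered K s.
Proof. by move=> Ks; rewrite /covered -cats1 takel_cat. Qed.

Lemma big_covered_rcons (K k : nat) (h : k.+1.-tuple 'I_m -> R) : (K <= k)%nat ->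
  \big[Rplus/0]_(u : k.+1.-tuple 'I_m | covered K u) h u =
  \big[Rplus/0]_(t : k.-tuple 'I_m | covered K t) \big[Rplus/0]_(i < m) h [tuple of rcons t i].
Proof.
move=> Kk; rewrite big_mkcond big_tuple_rcons [RHS]big_mkcond /=.
apply: eq_bigr => t _.
rewrite (eq_bigr (fun i => if covered K t then h [tuple of rcons t i] else 0)).
  by case: (covered K t) => //; rewrite big1.
by move=> i _; rewrite /= covered_rcons ?size_tuple.
Qed.

Lemma uncovered_rcons (K k : nat) : (K <= k)%nat -> uncovered K k.+1 = INR m * uncovered K k.
Proof.
move=> Kk; rewrite /uncovered big_tuple_rcons big_distrr /=; apply: eq_bigr => t _.
rewrite (eq_bigr (fun _ => b2R (~~ covered K t))) ?bigR_const_ord // => i _.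
by rewrite /= covered_rcons ?size_tuple.
Qed.

Lemma count_avoiding (j : 'I_m) (k : nat) :
  \big[Rplus/0]_(t : k.-tuple 'I_m) b2R (j \notin t) = (INR m - 1) ^ k.
Proof.
have others : \big[Rplus/0]_(i < m) b2R (j != i) = INR m - 1.
  rewrite (eq_bigr (fun i => 1 - b2R (i == j))); last first.
    by move=> i _; rewrite /b2R eq_sym; case: (i == j) => /=; ring.
  by rewrite bigR_sub bigR_const_ord /b2R -big_mkcond big_pred1_eq; ring.
elim: k => [|k IH].
  rewrite (eq_bigr (fun _ => 1)); first by rewrite big_const card_tuple /=; ring.
  by move=> t _; case: t => [[|]].
rewrite big_tuple_rcons /= (eq_bigr (fun t => (INR m - 1) * b2R (j \notin t)));
  first by rewrite -big_distrr /= IH.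
move=> t _; rewrite -others big_distrl /=; apply: eq_bigr => i _.
by rewrite /= mem_rcons inE negb_or /b2R; case: (j == i); case: (j \in t) => /=; ring.
Qed.

Lemma uncovered_le (K : nat) : uncovered K K <= INR m * (INR m - 1) ^ K.
Proof.
rewrite -bigR_const_ord (eq_bigr (fun j => \big[Rplus/0]_(t : K.-tuple 'I_m) b2R (j \notin t)));
  last by move=> j _; rewrite count_avoiding.
rewrite exchange_big /=; apply: bigR_le => t _.
have b2R_ge0 (c : bool) : 0 <= b2R c by rewrite /b2R; case: c; lra.
case cov : (covered K t); first by apply: bigR_ge0 => j _; apply: b2R_ge0.
move: cov; rewrite /covered take_oversize ?size_tuple // => /negbT.
rewrite negb_forall => /existsP [j jt]; rewrite (bigD1 j) //= {1}/b2R jt /=.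
rewrite -{1}(Rplus_0_r 1); apply: Rplus_le_compat_l.
by apply: bigR_ge0 => i _; apply: b2R_ge0.
Qed.

Lemma uncovered_frac_le (K k : nat) : (0 < m)%nat -> (K <= k)%nat ->
  uncovered K k / INR m ^ k <= INR m * ((INR m - 1) / INR m) ^ K.
Proof.
move=> m0 Kk; have m_pos : 0 < INR m by apply: lt_0_INR; apply/ltP.
have shift n : uncovered K (n + K) / INR m ^ (n + K) = uncovered K K / INR m ^ K.
  elim: n => [|n IH] //; rewrite -IH addSn uncovered_rcons ?leq_addl //=.
  by field; split; [apply: pow_nonzero|]; lra.
rewrite -(subnK Kk) shift /Rdiv Rpow_mult_distr pow_inv -Rmult_assoc.
apply: Rmult_le_compat_r; last exact: uncovered_le.
by apply/Rlt_le/Rinv_0_lt_compat/pow_lt.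
Qed.

Lemma prob_ge0 (k : nat) (E : k.-tuple 'I_m -> Prop) : (0 < m)%nat -> 0 <= prob E.
Proof.
move=> m0; apply: Rmult_le_pos.
  by apply: bigR_ge0 => t _; case: excluded_middle_informative => ? /=; lra.
by apply: Rlt_le; apply: Rinv_0_lt_compat; apply: pow_lt; apply: lt_0_INR; apply/ltP.
Qed.

End Coverage.

Lemma dot_aug_lagrangian_step (q : nat) (mu r e d : Vec q) (be : R) :
  - dot mu (fun k => r k + e k) + be / 2 * dot (fun k => r k + e k) (fun k => r k + e k)
  + dot (vsub mu (fun k => be * r k)) (fun k => e k + d k) - be / 2 * dot e e
  = - dot mu r + dot mu d + be / 2 * dot r r - be * dot r d.
Proof. by rewrite /dot /sumR /vsub; sum_ring. Qed.

Lemma dual_quad_ge0 (c a r rh be : R) : 0 < c -> 1 <= 2 * c * be ->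
  0 <= - (a * r) + (be / 2 - rh) * (r * r) + c * ((a + rh * r) * (a + rh * r)).
Proof.
move=> c0 cbe.
have -> : - (a * r) + (be / 2 - rh) * (r * r) + c * ((a + rh * r) * (a + rh * r)) =
   ((2 * c * (a + rh * r) - r) * (2 * c * (a + rh * r) - r) + (2 * c * be - 1) * (r * r))
   / (4 * c) by field; lra.
apply: Rmult_le_pos; last by apply/Rlt_le/Rinv_0_lt_compat; lra.
by apply: Rplus_le_le_0_compat; [apply: Rle_0_sqr | apply: Rmult_le_pos; [lra | apply: Rle_0_sqr]].
Qed.

Section Lyapunov.
Variables (N m q : nat) (blk : 'I_N -> 'I_m)
  (f : Vec N -> R) (gradf : Vec N -> Vec N) (g : 'I_m -> Vec N -> ER)
  (A : 'I_q -> 'I_N -> R) (b : Vec q)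
  (L : 'I_m -> R) (beta rho : R) (P : 'I_m -> 'I_N -> 'I_N -> R)
  (xs : Vec N) (lams : Vec q) (Fstar : R).

Hypothesis f_convex : convex_fun f.
Hypothesis f_grad : has_gradient f gradf.
Hypothesis g_block : forall i, block_fun blk i (g i).
Hypothesis g_convex : forall i, convex_efun (g i).
Hypothesis xs_feasible : resid A b xs = (fun _ => 0).
Hypothesis Fobj_xs : Fobj f g xs = Some Fstar.
Hypothesis xs_saddle : forall z, match Fobj f g z with
  | None => True
  | Some v => v - Fstar - dot lams (resid A b z) >= 0 end.
Hypothesis L_ge0 : forall i, 0 <= L i.
Hypothesis grad_lip : forall i z y,
  bnorm blk i (vsub (gradf (vadd z (Ublk blk i y))) (gradf z)) <= L i * bnorm blk i y.
Hypothesis P_ge0 : forall i z, 0 <= bquad blk i (P i) z.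
Hypothesis P_ge : forall i z,
  bquad blk i (P i) z >= L i * bdot blk i z z + beta * dot (bmulv blk i A z) (bmulv blk i A z).
Hypothesis m_gt0 : (0 < m)%nat.
Hypothesis rho_gt0 : 0 < rho.
Hypothesis rho_le : rho <= beta / INR m.

(* +oo is read as 0: gval is only used at points where every g_i is finite. *)
Definition gval (i : 'I_m) (x : Vec N) : R := if g i x is Some a then a else 0.
Definition gsum (x : Vec N) : R := \big[Rplus/0]_(i < m) gval i x.
Definition gap (x : Vec N) : R := f x + gsum x - Fstar - dot lams (resid A b x).
Definition Pdist (x : Vec N) : R := \big[Rplus/0]_(i < m) bquad blk i (P i) (vsub x xs).

Definition lyap (x : Vec N) (mu : Vec q) : R :=
  gap x - dot (vsub mu lams) (resid A b x) + / 2 * Pdist x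
  + (beta / 2 - rho) * dot (resid A b x) (resid A b x)
  + / (2 * INR m * rho) * dot (vsub (fun k => mu k + rho * resid A b x k) lams)
                              (vsub (fun k => mu k + rho * resid A b x k) lams).

Definition aug_lyap (x : Vec N) (mu : Vec q) : R :=
  f x + gsum x - Fstar - dot mu (resid A b x) + beta / 2 * dot (resid A b x) (resid A b x)
  + / 2 * Pdist x + / (2 * INR m * rho) * dot (vsub mu lams) (vsub mu lams).

Definition progress (x : Vec N) : R := gap x + rho / 2 * dot (resid A b x) (resid A b x).

Definition prox_dir (x : Vec N) (mu : Vec q) : Vec N :=
  vsub (gradf x) (tmulv A (vsub mu (fun r => beta * resid A b x r))).

Definition block_update (i : 'I_m) (x : Vec N) (mu : Vec q) (x' : Vec N) : Prop :=
  block_prox_min blk i (P i) (g i) (prox_dir x mu) x x'.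

Lemma m_pos : 0 < INR m.
Proof. by apply: lt_0_INR; apply/ltP. Qed.

Lemma Fobj_finite (x : Vec N) : (forall i, g i x <> None) -> Fobj f g x = Some (f x + gsum x).
Proof.
move=> gx; rewrite /Fobj (@big_eplus_Some _ _ (fun i => gval i x)) // => i.
by rewrite /gval; case: (g i x) (gx i).
Qed.

Lemma g_xs_finite (i : 'I_m) : g i xs <> None.
Proof.
move: Fobj_xs; rewrite /Fobj.
by case E : (\big[eplus/Some 0]_(i < m) g i xs) => [v|] // _; apply: big_eplus_Some_finite E i.
Qed.

Lemma Fstar_eq : Fstar = f xs + gsum xs.
Proof. by move: Fobj_xs; rewrite (Fobj_finite g_xs_finite) => -[]. Qed.

Lemma gap_ge0 (x : Vec N) : (forall i, g i x <> None) -> 0 <= gap x.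
Proof. by move=> gx; have := xs_saddle x; rewrite (Fobj_finite gx) /gap; lra. Qed.

Lemma resid_block_update (i : 'I_m) (x x' : Vec N) : (forall j, blk j <> i -> x' j = x j) ->
  resid A b x' = (fun k => resid A b x k + bmulv blk i A (vsub x' x) k).
Proof.
move=> off; apply: functional_extensionality => k.
rewrite /resid /mulv /bmulv -(@sumR_on_block _ _ blk i); last first.
  by move=> j /off; rewrite /vsub => ->; ring.
suff : sumR (fun j => A k j * vsub x' x j) =
       sumR (fun j => A k j * x' j) - sumR (fun j => A k j * x j) by lra.
by rewrite /sumR /vsub -bigR_sub; apply: eq_bigr => j _; ring.
Qed.

Lemma mulv_vsub_xs (x : Vec N) : mulv A (vsub x xs) = resid A b x.
Proof.
apply: functional_extensionality => k.
have := congr1 (fun v => v k) xs_feasible; rewrite /resid /mulv.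
suff : sumR (fun j => A k j * vsub x xs j) =
       sumR (fun j => A k j * x j) - sumR (fun j => A k j * xs j) by lra.
by rewrite /sumR /vsub -bigR_sub; apply: eq_bigr => j _; ring.
Qed.

Lemma gsum_block_update (i : 'I_m) (x x' : Vec N) : (forall j, blk j <> i -> x' j = x j) ->
  gsum x' = gsum x - gval i x + gval i x'.
Proof.
move=> off; rewrite /gsum (bigD1 i) // [in RHS](bigD1 i) //=.
rewrite (eq_bigr (fun l => gval l x)); first ring.
move=> l /eqP li; rewrite /gval (@g_block l x' x) // => j jl.
by apply: off; rewrite jl.
Qed.

Lemma Pdist_block_update (i : 'I_m) (x x' : Vec N) : (forall j, blk j <> i -> x' j = x j) ->
  Pdist x' = Pdist x - bquad blk i (P i) (vsub x xs) + bquad blk i (P i) (vsub x' xs).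
Proof.
move=> off; rewrite /Pdist (bigD1 i) // [in RHS](bigD1 i) //=.
rewrite (eq_bigr (fun l => bquad blk l (P l) (vsub x xs))); first ring.
move=> l /eqP li; apply: bquad_ext => j jl.
by rewrite /vsub off // jl.
Qed.

Lemma bdot_prox_dir (i : 'I_m) (x : Vec N) (mu : Vec q) (u : Vec N) :
  bdot blk i (prox_dir x mu) u =
  bdot blk i (gradf x) u - dot (vsub mu (fun r => beta * resid A b x r)) (bmulv blk i A u).
Proof.
rewrite -bdot_tmulv /bdot /sumB -bigR_sub.
by apply: eq_bigr => j _; rewrite /prox_dir /vsub; ring.
Qed.

Lemma prox_step_le (i : 'I_m) (x : Vec N) (mu : Vec q) (x' : Vec N) (a : R) :
  block_update i x mu x' -> g i x' = Some a ->
  f x' + a + / 2 * bquad blk i (P i) (vsub x' xs) - / 2 * bquad blk i (P i) (vsub x xs) <=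
  f x + gval i xs + bdot blk i (gradf x) (vsub xs x)
  + dot (vsub mu (fun r => beta * resid A b x r))
        (fun k => bmulv blk i A (vsub x' x) k + bmulv blk i A (vsub x xs) k)
  - beta / 2 * dot (bmulv blk i A (vsub x' x)) (bmulv blk i A (vsub x' x)).
Proof.
move=> upd ga; have off := upd.1.
pose z j := if blk j == i then xs j else x j.
have zoff j : blk j <> i -> z j = x j by rewrite /z => /eqP/negbTE ->.
have zon j : blk j = i -> z j = xs j by rewrite /z => ->; rewrite eqxx.
have gz : g i z = Some (gval i xs).
  by rewrite (@g_block i z xs) // /gval; case: (g i xs) (@g_xs_finite i).
have := prox_three_point (@g_convex i) upd ga zoff gz; rewrite /prox_obj.
rewrite (@bquad_ext _ _ _ _ _ (vsub z x') (vsub xs x')); last by move=> j /zon; rewrite /vsub => ->.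
rewrite (@bquad_ext _ _ _ _ _ (vsub z x) (vsub xs x)); last by move=> j /zon; rewrite /vsub => ->.
rewrite (@bdot_ext _ _ blk i (prox_dir x mu) z xs) //.
rewrite !bdot_prox_dir !(bquad_vsubC _ _ _ _ xs) => three_point.
have descent := block_descent f_grad (L_ge0 i) (grad_lip i) off.
have P_big := P_ge i (vsub x' x).
have split_dir :
    bdot blk i (gradf x) xs - bdot blk i (gradf x) x' + bdot blk i (gradf x) (vsub x' x)
    = bdot blk i (gradf x) (vsub xs x).
  by rewrite /bdot /sumB /vsub; sum_ring.
have split_A : dot (vsub mu (fun r => beta * resid A b x r)) (bmulv blk i A xs)
               - dot (vsub mu (fun r => beta * resid A b x r)) (bmulv blk i A x')
  = - dot (vsub mu (fun r => beta * resid A b x r))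
          (fun k => bmulv blk i A (vsub x' x) k + bmulv blk i A (vsub x xs) k).
  rewrite /dot /sumR -bigR_sub -bigR_opp; apply: eq_bigr => k _.
  suff -> : bmulv blk i A (vsub x' x) k + bmulv blk i A (vsub x xs) k
            = bmulv blk i A x' k - bmulv blk i A xs k by ring.
  by rewrite /bmulv /sumB /vsub; sum_ring.
lra.
Qed.

Lemma lyap_dual_step (x : Vec N) (mu : Vec q) :
  lyap x (fun k => mu k - rho * resid A b x k) = aug_lyap x mu.
Proof.
rewrite /lyap /aug_lyap /gap.
have -> : vsub (fun k => mu k - rho * resid A b x k + rho * resid A b x k) lams = vsub mu lams.
  by apply: functional_extensionality => k; rewrite /vsub; ring.
have -> : dot (vsub (fun k => mu k - rho * resid A b x k) lams) (resid A b x) =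
          dot mu (resid A b x) - rho * dot (resid A b x) (resid A b x) - dot lams (resid A b x).
  by rewrite /dot /sumR /vsub; sum_ring.
ring.
Qed.

Lemma aug_lyap_block_update_le (i : 'I_m) (x : Vec N) (mu : Vec q) (x' : Vec N) :
  block_update i x mu x' ->
  aug_lyap x' mu <= aug_lyap x mu
    + (gval i xs - gval i x + bdot blk i (gradf x) (vsub xs x)
       + dot mu (bmulv blk i A (vsub x xs))
       - beta * dot (resid A b x) (bmulv blk i A (vsub x xs))).
Proof.
move=> upd; have [off [a [ga _]]] := upd.
have := prox_step_le upd ga.
have := dot_aug_lagrangian_step mu (resid A b x) (bmulv blk i A (vsub x' x))
                                (bmulv blk i A (vsub x xs)) beta.
rewrite /aug_lyap (gsum_block_update off) (Pdist_block_update off) (resid_block_update off).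
rewrite {3}/gval ga; lra.
Qed.

Lemma lyap_expand (x : Vec N) (mu : Vec q) :
  INR m * lyap x mu - progress x =
  INR m * aug_lyap x mu - (f x + gsum x - Fstar) + dot mu (resid A b x)
  - INR m * rho * dot (resid A b x) (resid A b x).
Proof.
have m0 := m_pos.
rewrite /lyap /aug_lyap /progress /gap dot_vsubl.
have -> : forall r : Vec q,
    dot (vsub (fun k => mu k + rho * r k) lams) (vsub (fun k => mu k + rho * r k) lams) =
    dot (vsub mu lams) (vsub mu lams) + 2 * rho * (dot mu r - dot lams r) + rho * rho * dot r r.
  by move=> r; rewrite /dot /sumR /vsub; sum_ring.
by field; lra.
Qed.

Lemma sum_block_gains (x : Vec N) (mu : Vec q) :
  \big[Rplus/0]_(i < m)
    (gval i xs - gval i x + bdot blk i (gradf x) (vsub xs x)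
     + dot mu (bmulv blk i A (vsub x xs))
     - beta * dot (resid A b x) (bmulv blk i A (vsub x xs)))
  = gsum xs - gsum x + dot (gradf x) (vsub xs x) + dot mu (resid A b x)
    - beta * dot (resid A b x) (resid A b x).
Proof.
have dot_sum (v : Vec q) :
    \big[Rplus/0]_(i < m) dot v (bmulv blk i A (vsub x xs)) = dot v (resid A b x).
  rewrite -mulv_vsub_xs /dot /sumR exchange_big /=; apply: eq_bigr => k _.
  by rewrite /mulv (@sumR_blocks _ _ blk) big_distrr.
by rewrite -!dot_sum -(@bdot_sum _ _ blk) /gsum; sum_ring.
Qed.

Lemma m_rho_le : INR m * rho <= beta.
Proof.
have m0 := m_pos; have -> : beta = INR m * (beta / INR m) by field; lra.
by apply: Rmult_le_compat_l; lra.
Qed.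

Lemma lyap_sum_next_le (x : Vec N) (mu : Vec q) (x' : 'I_m -> Vec N) :
  (forall i, block_update i x mu (x' i)) ->
  \big[Rplus/0]_(i < m) lyap (x' i) (fun k => mu k - rho * resid A b (x' i) k) + progress x
  <= INR m * lyap x mu.
Proof.
move=> upd; under eq_bigr do rewrite lyap_dual_step.
have sum_le := @bigR_le _ xpredT _ _ (fun i _ => aug_lyap_block_update_le (upd i)).
rewrite [X in _ <= X]big_split /= bigR_const_ord sum_block_gains in sum_le.
set S := \big[Rplus/0]_(i < m) aug_lyap (x' i) mu in sum_le *.
have := lyap_expand x mu.
have := convex_gradient_ineq x xs f_convex f_grad.
have r0 := dot_ge0 (resid A b x).
have := Rmult_le_compat_r _ _ _ r0 m_rho_le.
have := Fstar_eq; lra.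
Qed.

Lemma lyap_ge_gap (x : Vec N) (mu : Vec q) : gap x <= lyap x mu.
Proof.
have m0 := m_pos; have mrb := m_rho_le.
set c := / (2 * INR m * rho); set r := resid A b x.
have c0 : 0 < c by apply: Rinv_0_lt_compat; nra.
have cbeta : 1 <= 2 * c * beta.
  have -> : 2 * c * beta = 1 + (beta - INR m * rho) * / (INR m * rho).
    by rewrite /c; field; split; lra.
  have : 0 <= (beta - INR m * rho) * / (INR m * rho).
    by apply: Rmult_le_pos; [lra | apply/Rlt_le/Rinv_0_lt_compat; nra].
  lra.
have Pdist0 : 0 <= Pdist x by apply: bigR_ge0 => i _; apply: P_ge0.
have dual0 : 0 <= - dot (vsub mu lams) r + (beta / 2 - rho) * dot r r
                  + c * dot (vsub (fun k => mu k + rho * r k) lams)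
                            (vsub (fun k => mu k + rho * r k) lams).
  have -> : - dot (vsub mu lams) r + (beta / 2 - rho) * dot r r
            + c * dot (vsub (fun k => mu k + rho * r k) lams)
                      (vsub (fun k => mu k + rho * r k) lams)
    = sumR (fun k => - ((mu k - lams k) * r k) + (beta / 2 - rho) * (r k * r k)
                     + c * ((mu k - lams k + rho * r k) * (mu k - lams k + rho * r k))).
    by rewrite /dot /sumR /vsub; sum_ring.
  by apply: bigR_ge0 => k _; apply: dual_quad_ge0.
rewrite /lyap -/r -/c; lra.
Qed.

Lemma progress_ge0 (x : Vec N) : (forall i, g i x <> None) -> 0 <= progress x.
Proof.
move=> gx; have := gap_ge0 gx; have := dot_ge0 (resid A b x).
by rewrite /progress; nra.
Qed.

Lemma progress_ge_resid (x : Vec N) (eps : R) : (forall i, g i x <> None) ->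
  0 <= eps -> eps <= norm (resid A b x) -> rho / 2 * (eps * eps) <= progress x.
Proof.
move=> gx eps0 far; have := gap_ge0 gx; have r0 := dot_ge0 (resid A b x).
have : eps * eps <= dot (resid A b x) (resid A b x).
  by rewrite -(sqrt_sqrt _ r0); apply: Rmult_le_compat.
by rewrite /progress; nra.
Qed.

Lemma progress_ge_Fobj (eps : R) : 0 < eps -> exists2 eta, 0 < eta &
  forall x, (forall i, g i x <> None) -> eps <= Rabs (f x + gsum x - Fstar) -> eta <= progress x.
Proof.
move=> eps0; set nl := dot lams lams; have nl0 : 0 <= nl := dot_ge0 _.
set s := eps / (nl + 1); have s0 : 0 < s by apply: Rdiv_lt_0_compat; lra.
set c := / (s * rho); have c0 : 0 < c by apply/Rinv_0_lt_compat/Rmult_lt_0_compat.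
exists (eps / (2 * (1 + c))) => [|x gx far]; first by apply: Rdiv_lt_0_compat; lra.
have := gap_ge0 gx; rewrite /progress /gap; set r := resid A b x => gap0.
have r0 : 0 <= dot r r := dot_ge0 _.
have := abs_dot_le_amgm lams r s0; rewrite -/nl.
have -> : / (2 * s) * dot r r = c * (rho / 2 * dot r r) by rewrite /c; field; lra.
have snl : s / 2 * nl <= eps / 2.
  have -> : s / 2 * nl = eps / 2 - s / 2 by rewrite /s; field; lra.
  lra.
have tri : Rabs (f x + gsum x - Fstar) <= (f x + gsum x - Fstar - dot lams r) + Rabs (dot lams r).
  have := Rabs_triang (f x + gsum x - Fstar - dot lams r) (dot lams r).
  rewrite [Rabs (_ - dot lams r)]Rabs_pos_eq //.
  by have -> : f x + gsum x - Fstar - dot lams r + dot lams r = f x + gsum x - Fstar by ring.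
move=> amgm; apply: (Rmult_le_reg_l (1 + c)); first lra.
have -> : (1 + c) * (eps / (2 * (1 + c))) = eps / 2 by field; lra.
nra.
Qed.

Variables (x : forall k, k.-tuple 'I_m -> Vec N) (lam : forall k, k.-tuple 'I_m -> Vec q).
Hypothesis alg : algorithm1 blk f gradf g A b beta rho P x lam.

Lemma alg_block_update (k : nat) (t : k.-tuple 'I_m) (i : 'I_m) :
  block_update i (x t) (lam t) (x [tuple of rcons t i]) /\
  lam [tuple of rcons t i] = (fun r => lam t r - rho * resid A b (x [tuple of rcons t i]) r).
Proof. by have [off [min dual]] := alg.2 k t i. Qed.

Lemma lyap_tuple_step (k : nat) (t : k.-tuple 'I_m) :
  \big[Rplus/0]_(i < m) lyap (x [tuple of rcons t i]) (lam [tuple of rcons t i]) + progress (x t)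
  <= INR m * lyap (x t) (lam t).
Proof.
under eq_bigr do rewrite (alg_block_update t _).2.
by apply: lyap_sum_next_le => i; apply: (alg_block_update t i).1.
Qed.

(* Each later update either leaves x_j unchanged or is a block-j step, where g_j is finite. *)
Lemma g_finite_of_mem (k : nat) (t : k.-tuple 'I_m) (j : 'I_m) : j \in t -> g j (x t) <> None.
Proof.
elim: k t => [|k IH] t; first by case: t => [[|]].
have [t' [i ->]] := tuple_rconsP t.
have [[off [a [ga _]]] _] := alg_block_update t' i.
rewrite /= mem_rcons inE; case: eqVneq => [-> _ | ji /= jt']; first by rewrite ga.
rewrite (@g_block j _ (x t')); first exact: IH.
by move=> l lj; apply: off; rewrite lj; apply/eqP.
Qed.

Lemma covered_finite (K k : nat) (t : k.-tuple 'I_m) :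
  covered K t -> forall j, g j (x t) <> None.
Proof. by move=> /forallP cov j; apply/g_finite_of_mem/mem_take/cov. Qed.

Definition lyap_mass (K k : nat) : R :=
  \big[Rplus/0]_(t : k.-tuple 'I_m | covered K t) lyap (x t) (lam t).
Definition progress_mass (K k : nat) : R :=
  \big[Rplus/0]_(t : k.-tuple 'I_m | covered K t) progress (x t).

Lemma lyap_mass_step (K k : nat) : (K <= k)%nat ->
  lyap_mass K k.+1 + progress_mass K k <= INR m * lyap_mass K k.
Proof.
move=> Kk; rewrite /lyap_mass /progress_mass big_covered_rcons // -big_split big_distrr /=.
by apply: bigR_le => t _; apply: lyap_tuple_step.
Qed.

Lemma progress_mass_ge0 (K k : nat) : 0 <= progress_mass K k.
Proof. by apply: bigR_ge0 => t /covered_finite; apply: progress_ge0. Qed.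

Lemma lyap_mass_ge0 (K k : nat) : 0 <= lyap_mass K k.
Proof.
apply: bigR_ge0 => t /covered_finite fin.
exact: Rle_trans (gap_ge0 fin) (lyap_ge_gap _ _).
Qed.

Lemma progress_mass_cv0 (K : nat) : Un_cv (fun k => progress_mass K k / INR m ^ k) 0.
Proof.
have m0 := m_pos; apply: (CV_shift _ K); rewrite plusE.
apply: (@cv0_of_le_decrements (INR m) (fun n => lyap_mass K (n + K) / INR m ^ (n + K))) => // n.
  by apply: Rmult_le_pos; [apply: lyap_mass_ge0 | apply/Rlt_le/Rinv_0_lt_compat/pow_lt].
have mk := pow_lt _ (n + K) m0.
split; first by apply: Rmult_le_pos; [apply: progress_mass_ge0 | apply/Rlt_le/Rinv_0_lt_compat].
have := lyap_mass_step (leq_addl n K); rewrite addSn /=.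
have -> : forall u v, INR m * (u / INR m ^ (n + K) - v / (INR m * INR m ^ (n + K)))
                      = (INR m * u - v) / INR m ^ (n + K) by move=> *; field; lra.
move=> step; apply: Rmult_le_compat_r; [by apply/Rlt_le/Rinv_0_lt_compat | lra].
Qed.

Lemma prob_le_uncovered_progress (K k : nat) (E : k.-tuple 'I_m -> Prop) (eta : R) :
  0 < eta -> (forall t : k.-tuple 'I_m, covered K t -> E t -> eta <= progress (x t)) ->
  prob E <= uncovered m K k / INR m ^ k + progress_mass K k / eta / INR m ^ k.
Proof.
move=> eta0 E_prog; have mk := pow_lt _ k m_pos.
rewrite /prob -Rdiv_plus_distr; apply: Rmult_le_compat_r; first exact/Rlt_le/Rinv_0_lt_compat.
rewrite /uncovered /progress_mass /Rdiv big_distrl [X in _ + X]big_mkcond -big_split /=.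
apply: bigR_le => t _; rewrite /b2R.
case: excluded_middle_informative => Et; case cov : (covered K t) => /=; try lra.
- have := E_prog t cov Et => le_eta.
  suff : 1 <= progress (x t) * / eta by lra.
  by apply: (Rmult_le_reg_r eta) => //; rewrite Rmult_assoc Rinv_l; lra.
- rewrite Rplus_0_l; apply: Rmult_le_pos; last exact/Rlt_le/Rinv_0_lt_compat.
  exact/progress_ge0/(covered_finite cov).
Qed.

Lemma prob_cv0 (E : forall k, k.-tuple 'I_m -> Prop) (eta : R) : 0 < eta ->
  (forall k (t : k.-tuple 'I_m), (forall i, g i (x t) <> None) -> E k t -> eta <= progress (x t)) ->
  Un_cv (fun k => prob (E k)) 0.
Proof.
move=> eta0 E_prog eps eps0; have m0 := m_pos.
have m1 : 1 <= INR m by apply: (le_INR 1); apply/leP.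
have ratio : Rabs ((INR m - 1) / INR m) < 1.
  rewrite Rabs_pos_eq; last by apply: Rmult_le_pos; [lra | apply/Rlt_le/Rinv_0_lt_compat].
  by apply: (Rmult_lt_reg_r (INR m)); rewrite // /Rdiv Rmult_assoc Rinv_l; lra.
have [K K_small] :=
  pow_lt_1_zero _ ratio (eps / (2 * INR m)) ltac:(apply: Rdiv_lt_0_compat; lra).
have [N1 mass_small] := @progress_mass_cv0 K (eps * eta / 2) ltac:(nra).
exists (maxn N1 K) => k /leP k_ge.
have [N1k Kk] : (N1 <= k)%nat /\ (K <= k)%nat.
  by split; apply: leq_trans k_ge; rewrite ?leq_maxl ?leq_maxr.
rewrite /R_dist Rminus_0_r Rabs_pos_eq; last exact: prob_ge0.
apply: Rle_lt_trans
  (prob_le_uncovered_progress (K := K) eta0 (fun t cov => E_prog k t (covered_finite cov))) _.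
have := uncovered_frac_le m_gt0 Kk.
have := K_small K (le_n K); rewrite Rabs_pos_eq; last first.
  by apply: pow_le; apply: Rmult_le_pos; [lra | apply/Rlt_le/Rinv_0_lt_compat].
have := mass_small k (leP N1k); rewrite /R_dist Rminus_0_r Rabs_pos_eq; last first.
  by apply: Rmult_le_pos; [apply: progress_mass_ge0 | apply/Rlt_le/Rinv_0_lt_compat/pow_lt].
move=> mass_lt pow_small uncov_le.
have : INR m * ((INR m - 1) / INR m) ^ K < eps / 2.
  have -> : eps / 2 = INR m * (eps / (2 * INR m)) by field; lra.
  exact: Rmult_lt_compat_l.
have : progress_mass K k / eta / INR m ^ k < eps / 2.
  have -> : progress_mass K k / eta / INR m ^ k = progress_mass K k / INR m ^ k / eta.
    by field; split; [apply: pow_nonzero|]; lra.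
  have -> : eps / 2 = eps * eta / 2 / eta by field; lra.
  by apply: Rmult_lt_compat_r; [apply: Rinv_0_lt_compat | ].
lra.
Qed.

End Lyapunov.

Theorem mainTheorem6
  (N m q : nat) (blk : 'I_N -> 'I_m)
  (f : Vec N -> R) (gradf : Vec N -> Vec N) (g : 'I_m -> Vec N -> ER)
  (A : 'I_q -> 'I_N -> R) (b : Vec q)
  (L : 'I_m -> R) (Lr : R) (beta rho : R) (P : 'I_m -> 'I_N -> 'I_N -> R)
  (xs : Vec N) (lams : Vec q) (Fstar : R)
  (x : forall k, k.-tuple 'I_m -> Vec N) (lam : forall k, k.-tuple 'I_m -> Vec q) :
  (0 < m)%nat ->
  (forall i : 'I_m, exists j, blk j = i) ->
  convex_fun f -> has_gradient f gradf -> continuous_map gradf ->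
  (forall i, block_fun blk i (g i) /\ proper_fun (g i) /\ convex_efun (g i) /\ lsc_efun (g i)) ->
  resid A b xs = (fun _ => 0) -> Fobj f g xs = Some Fstar ->
  (forall z, match Fobj f g z with
             | None => True
             | Some v => v - Fstar - dot lams (resid A b z) >= 0 end) ->
  (forall i, 0 < L i) ->
  (forall i z y, bnorm blk i (vsub (gradf (vadd z (Ublk blk i y))) (gradf z))
                 <= L i * bnorm blk i y) ->
  (forall i z y, norm (vsub (gradf (vadd z (Ublk blk i y))) (gradf z))
                 <= Lr * bnorm blk i y) ->
  0 < beta -> 0 < rho -> rho <= beta / INR m ->
  (forall i j l, P i j l = P i l j) ->
  (forall i z, 0 <= bquad blk i (P i) z) ->
  (forall i z, bquad blk i (P i) z >=
               L i * bdot blk i z z + beta * dot (bmulv blk i A z) (bmulv blk i A z)) ->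
  algorithm1 blk f gradf g A b beta rho P x lam ->
  (forall eps, 0 < eps ->
     Un_cv (fun k => prob (fun t : k.-tuple 'I_m =>
              ~ (exists v, Fobj f g (x k t) = Some v /\ Rabs (v - Fstar) < eps))) 0) /\
  (forall eps, 0 < eps ->
     Un_cv (fun k => prob (fun t : k.-tuple 'I_m => norm (resid A b (x k t)) >= eps)) 0).
Proof.
move=> m_gt0 _ f_convex f_grad _ g_props xs_feasible Fobj_xs xs_saddle L_gt0 grad_lip _
  _ rho_gt0 rho_le _ P_ge0 P_ge alg.
have g_block i : block_fun blk i (g i) by case: (g_props i).
have g_convex i : convex_efun (g i) by case: (g_props i) => _ [_ []].
have L_ge0 i : 0 <= L i by apply/Rlt_le.
have prob_cv0 := prob_cv0 f_convex f_grad g_block g_convex xs_feasible Fobj_xs xs_saddle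
  L_ge0 grad_lip P_ge0 P_ge m_gt0 rho_gt0 rho_le alg.
split=> eps eps0.
- have [eta eta0 far] := progress_ge_Fobj xs_saddle rho_gt0 eps0.
  apply: (prob_cv0 _ _ eta0) => k t fin not_close.
  apply: (far _ fin); apply: Rnot_lt_le => close; apply: not_close.
  by exists (f (x k t) + gsum g (x k t)); split; [exact: (Fobj_finite f fin) |].
- have eta0 : 0 < rho / 2 * (eps * eps) by apply: Rmult_lt_0_compat; nra.
  apply: (prob_cv0 _ _ eta0) => k t fin /Rge_le far.
  by apply: (progress_ge_resid xs_saddle rho_gt0 fin) => //; lra.
Qed.
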